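(* Let $P$ be a finite lattice and $f\in\mathcal{L}_P$. If $s$ is a minimal element of $\mathcal{S}_f=\{s\in\mathcal{L}_P: f+s=1\}$, then $s$ is prime, i.e. $P\setminus\Phi s$ is closed under $\wedge$.
   Context: $P$ is a finite lattice with greatest element $\hat p$. $\mathcal{L}_P$ is the set of maps $f:P\to P$ satisfying (A.1) $a\le f(a)$; (A.2) $a\le b\Rightarrow f(a)\le f(b)$; (A.3) $f(f(a))=f(a)$, ordered pointwise; it is a lattice with join $+$ and greatest element $1:a\mapsto\hat p$. $\Phi f=\{a:f(a)=a\}$; one has $f+s=1$ iff $\Phi f\cap\Phi s=\{\hat p\}$. A map is prime if its set of non-fixed points is closed under $\wedge$. *)

From HB Require Import structures.
From mathcomp Require Import all_boot all_order.
Set Implicit Arguments. Unset Strict Implicit. Unset Printing Implicit Defensive.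
Import Order.TTheory.
Local Open Scope order_scope.

(* A finite lattice P: a finite (nonempty) lattice, hence with top \top = \hat p. *)

Definition closure_op {d} {P : finTBLatticeType d} (f : P -> P) : Prop :=
  [/\ forall a : P, a <= f a,
      forall a b : P, a <= b -> f a <= f b
    & forall a : P, f (f a) = f a].

Definition le_op {d} {P : finTBLatticeType d} (f g : P -> P) : Prop :=
  forall a : P, f a <= g a.

Definition one_op {d} {P : finTBLatticeType d} : P -> P := fun _ => \top.

Definition is_join_op {d} {P : finTBLatticeType d} (f s h : P -> P) : Prop :=
  [/\ closure_op h, le_op f h, le_op s h
    & forall g : P -> P, closure_op g -> le_op f g -> le_op s g -> le_op h g].

Definition in_Sf {d} {P : finTBLatticeType d} (f s : P -> P) : Prop :=
  closure_op s /\ is_join_op f s one_op.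

Definition minimal_in_Sf {d} {P : finTBLatticeType d} (f s : P -> P) : Prop :=
  in_Sf f s /\ forall t : P -> P, in_Sf f t -> le_op t s -> forall a, t a = s a.

(* fixed points Phi f, and primality: P \ Phi s closed under meet *)
Definition prime_op {d} {P : finTBLatticeType d} (s : P -> P) : Prop :=
  forall a b : P, s a != a -> s b != b -> s (a `&` b) != a `&` b.

From mathcomp Require Import all_boot all_order.
Import Order.TTheory.
Local Open Scope order_scope.
Set Implicit Arguments. Unset Strict Implicit.

(* If s is minimal with f + s = 1 and s a <> a, then shrinking s on the
   down-set of a (a' |-> a /\ s a' for a' <= a) gives a smaller closure
   operator t, so f + t <> 1: some y in Phi s makes a /\ y a fixed point of f
   other than the top.  With such witnesses y for a and z for b, the element
   (a /\ y) /\ (b /\ z) = (a /\ b) /\ (y /\ z) lies in Phi f, and also in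
   Phi s if a /\ b did; then it is the top, and so is a /\ y. *)

Section ClosureOperators.
Variables (d : Order.disp_t) (P : finTBLatticeType d).
Implicit Types (f g h s : P -> P) (x : P).

Lemma closure_op_fix_meet h x y :
  closure_op h -> h x = x -> h y = y -> h (x `&` y) = x `&` y.
Proof.
move=> [h_ext h_mono _] hx hy; apply/le_anti; rewrite h_ext andbT lexI.
by rewrite -{2}hx -{3}hy !h_mono ?leIl ?leIr.
Qed.

Lemma closure_op_le_fix h x a : closure_op h -> h x = x -> a <= x -> h a <= x.
Proof. by move=> [_ h_mono _] hx ax; rewrite -hx h_mono. Qed.

Lemma le_op_fix h g a : closure_op h -> closure_op g -> le_op h g -> h (g a) = g a.
Proof.
move=> [h_ext _ _] [_ _ g_idem] hg; apply/le_anti.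
by rewrite h_ext andbT -[X in _ <= X]g_idem hg.
Qed.

Definition principal_op x : P -> P := fun a => if a <= x then x else \top.

Lemma closure_principal_op x : closure_op (principal_op x).
Proof.
rewrite /principal_op; split=> [a|a b ab|a]; first by case: ifP.
  by case bx: (b <= x); [rewrite (le_trans ab bx) | case: ifP].
by case: (a <= x); [rewrite lexx | case: ifP => // tx; apply/le_anti; rewrite tx lex1].
Qed.

Lemma le_principal_op h x : closure_op h -> h x = x -> le_op h (principal_op x).
Proof. by move=> hc hx a; rewrite /principal_op; case: ifP => // /(closure_op_le_fix hc hx). Qed.

Lemma join_one_opP f s : closure_op f -> closure_op s ->
  is_join_op f s one_op <-> forall x, f x = x -> s x = x -> x = \top.
Proof.
move=> fc sc; split=> [[_ _ _ one_least] x fx sx | common_fix_top].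
  have := one_least _ (closure_principal_op x) (le_principal_op fc fx).
  move=> /(_ (le_principal_op sc sx) x); rewrite /principal_op lexx => topx.
  by apply/le_anti; rewrite topx lex1.
split=> // [| a | a | g gc fg sg a]; try exact: lex1.
  by split=> *; rewrite /one_op ?lex1.
by rewrite /one_op (common_fix_top (g a)) ?lexx //; exact: le_op_fix.
Qed.

Definition cut_op x s : P -> P := fun a => if a <= x then x `&` s a else s a.

Lemma closure_cut_op x s : closure_op s -> closure_op (cut_op x s).
Proof.
move=> [s_ext s_mono s_idem]; rewrite /cut_op; split=> [a|a b ab|a].
- by case: ifP => [ax|_]; rewrite ?lexI ?ax s_ext.
- case bx: (b <= x); first by rewrite (le_trans ab bx) leI2 ?s_mono.
  by case: ifP => _; [apply: le_trans (leIr _ _) _|]; apply: s_mono.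
- case ax: (a <= x); last first.
    have -> : (s a <= x) = false by apply: contraFF ax; apply: le_trans.
    exact: s_idem.
  rewrite leIl; congr (_ `&` _); apply/le_anti.
  by rewrite -[X in _ <= X]s_idem !s_mono ?leIr // lexI ax s_ext.
Qed.

Lemma le_cut_op x s : le_op (cut_op x s) s.
Proof. by move=> a; rewrite /cut_op; case: ifP => // _; apply: leIr. Qed.

Lemma cut_op_id x s : closure_op s -> cut_op x s x = x.
Proof. by move=> [s_ext _ _]; rewrite /cut_op lexx meet_l. Qed.

Lemma minimal_in_Sf_nonfix_meet f s x : closure_op f -> minimal_in_Sf f s ->
  s x != x -> exists y, [/\ s y = y, f (x `&` y) = x `&` y & x `&` y != \top].
Proof.
move=> fc [[sc sS] s_min] sx.
case: (boolP [exists y, [&& s y == y, f (x `&` y) == x `&` y & x `&` y != \top]]).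
  by move=> /existsP [y /and3P [/eqP sy /eqP fxy xy_top]]; exists y.
move=> /existsPn no_witness; have [_ _ s_idem] := sc.
have tc := closure_cut_op x sc.
have tS : in_Sf f (cut_op x s).
  split=> //; apply/join_one_opP => // z fz; rewrite /cut_op.
  case: ifP => _ tz; last exact: (join_one_opP fc sc).1 sS z fz tz.
  have := no_witness (s z); rewrite s_idem eqxx tz fz eqxx /=.
  by move=> /negPn/eqP.
have := s_min _ tS (le_cut_op x s) x.
by rewrite cut_op_id // => xs; rewrite -xs eqxx in sx.
Qed.

End ClosureOperators.

Theorem mainTheorem13 (d : Order.disp_t) (P : finTBLatticeType d) (f s : P -> P) :
  closure_op f -> minimal_in_Sf f s -> prime_op s.
Proof.
move=> fc s_min a b sa sb; apply/negP => /eqP sab.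
have [[sc sS] _] := s_min.
have [y [sy fay ay_top]] := minimal_in_Sf_nonfix_meet fc s_min sa.
have [z [sz fbz _]] := minimal_in_Sf_nonfix_meet fc s_min sb.
pose w := (a `&` y) `&` (b `&` z).
have fw : f w = w by apply: closure_op_fix_meet.
have sw : s w = w.
  by rewrite /w meetACA; do 2!apply: closure_op_fix_meet => //.
have w_top := (join_one_opP fc sc).1 sS w fw sw.
by move/eqP: ay_top; apply; apply/le_anti; rewrite lex1 -w_top; exact: leIl.
Qed.
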